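(* Let $\phi_2$ be a topological flow on a compact metric space $(M_2,\mathrm{dist}_2)$ whose limit set $L(\phi_2)$ is a finite set of singularities, each Lyapunov stable or Lyapunov unstable. Let $\varepsilon_0>0$ and $r_2>0$, and put $F=M_2\setminus\bigcup_{p\in\mathrm{Sing}(\phi_2)}B(r_2,p)$. Then there exist $d_1>0$ and $S_0>0$ such that whenever $\xi_2$ is a $d_1$-pseudotrajectory of $\phi_2$ with $\xi_2(s_0)\in F$ for some $s_0\in\mathbb{R}$, there exist a Lyapunov unstable point $p\in\mathrm{Sing}(\phi_2)$ and a Lyapunov stable point $q\in\mathrm{Sing}(\phi_2)$ such that $\xi_2(t+s_0)\in B(r_2,p)$ for all $t\le -S_0$, $\xi_2(t+s_0)\in B(r_2,q)$ for all $t\ge S_0$, and $\mathrm{dist}_2(\xi_2(t+s_0),\phi_2(t,\xi_2(s_0)))<\min\{r_2,\varepsilon_0/4\}$ for all $t\in[-S_0,2S_0]$.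
   Context: A topological flow is a continuous $\phi:\mathbb{R}\times M\to M$ with $\phi(0,x)=x$, $\phi(s+t,x)=\phi(s,\phi(t,x))$; $\mathrm{Sing}$ is its set of fixed points. A singularity $p$ is Lyapunov stable if for every neighborhood $V$ of $p$ there is a neighborhood $U$ of $p$ with $\phi(t,x)\in V$ for all $t\ge0$, $x\in U$; Lyapunov unstable if the same holds for $t\le0$. $L(\phi)$ is the union over all $x$ of the $\omega$- and $\alpha$-limit sets of $x$. A $d$-pseudotrajectory is a map $\xi:\mathbb{R}\to M$ with $\mathrm{dist}(\xi(t+s),\phi(s,\xi(t)))<d$ for all $t\in\mathbb{R}$, $s\in[0,1]$. $B(r,p)$ is the open ball. *)

From Stdlib Require Import Reals List.
Open Scope R_scope.

Section Defs.
Context {M : Type} (dist : M -> M -> R).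

Definition is_metric : Prop :=
  (forall x y, 0 <= dist x y) /\
  (forall x y, dist x y = 0 <-> x = y) /\
  (forall x y, dist x y = dist y x) /\
  (forall x y z, dist x z <= dist x y + dist y z).

Definition ball (r : R) (p : M) : M -> Prop := fun x => dist p x < r.

Definition is_open (U : M -> Prop) : Prop :=
  forall x, U x -> exists e, 0 < e /\ forall y, ball e x y -> U y.

Definition is_compact_space : Prop :=
  forall (I : Type) (U : I -> M -> Prop),
    (forall i, is_open (U i)) -> (forall x, exists i, U i x) ->
    exists l : list I, forall x, exists i, In i l /\ U i x.

Definition nbhd (p : M) (V : M -> Prop) : Prop :=
  exists e, 0 < e /\ forall y, ball e p y -> V y.

Variable phi : R -> M -> M.

Definition is_flow : Prop :=
  (forall t x eps, 0 < eps -> exists delta, 0 < delta /\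
     forall s y, Rabs (s - t) < delta -> dist x y < delta ->
       dist (phi t x) (phi s y) < eps) /\
  (forall x, phi 0 x = x) /\
  (forall s t x, phi (s + t) x = phi s (phi t x)).

Definition Sing (p : M) : Prop := forall t, phi t p = p.

Definition lyap_stable (p : M) : Prop :=
  forall V, nbhd p V -> exists U, nbhd p U /\
    forall x t, U x -> 0 <= t -> V (phi t x).

Definition lyap_unstable (p : M) : Prop :=
  forall V, nbhd p V -> exists U, nbhd p U /\
    forall x t, U x -> t <= 0 -> V (phi t x).

Definition omega_limit (x y : M) : Prop :=
  forall eps T, 0 < eps -> exists t, T <= t /\ dist (phi t x) y < eps.
Definition alpha_limit (x y : M) : Prop :=
  forall eps T, 0 < eps -> exists t, t <= T /\ dist (phi t x) y < eps.

Definition limit_set (y : M) : Prop :=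
  exists x, omega_limit x y \/ alpha_limit x y.

Definition pseudotrajectory (d : R) (xi : R -> M) : Prop :=
  forall t s, 0 <= s <= 1 -> dist (xi (t + s)) (phi s (xi t)) < d.

End Defs.

From Stdlib Require Import Reals List Lra Classical ClassicalEpsilon.
Require Coquelicot.Compactness.
Open Scope R_scope.

(* On a bounded time window a fine enough pseudotrajectory shadows the true orbit
   (uniform continuity of the flow on compact time intervals).  The orbit of a point
   of F has an omega-limit point, a singularity; it cannot be Lyapunov unstable,
   since the backward orbit would then stay arbitrarily close to it, so it is a
   stable singularity q.  Near q, isolated in the finite limit set, every orbit is
   attracted to q, uniformly on a small closed ball by compactness; hence a
   pseudotrajectory entering that ball comes back to it after a fixed time and in
   between never leaves the r-ball around q.  Compactness of F makes the entry time
   and all tolerances uniform in the starting point, and reversing time produces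
   the unstable singularity p in the past. *)

Lemma list_upper_bound {A : Type} (f : A -> R) (l : list A) :
  exists T, forall a, In a l -> f a <= T.
Proof.
  induction l as [|a l [T HT]].
  - exists 0. intros a [].
  - exists (Rmax (f a) T). intros b [<-|Hb].
    + apply Rmax_l.
    + eapply Rle_trans; [apply HT; auto | apply Rmax_r].
Qed.

Lemma list_pos_lower_bound {A : Type} (P : A -> Prop) (g : A -> R) (l : list A) :
  (forall a, P a -> 0 < g a) ->
  exists m, 0 < m /\ forall a, In a l -> P a -> m <= g a.
Proof.
  intros Hg. induction l as [|a l [m [Hm HT]]].
  - exists 1. split; [lra|]. intros a [].
  - destruct (classic (P a)) as [Pa|nPa].
    + exists (Rmin (g a) m). split.
      * apply Rmin_glb_lt; auto.
      * intros b [<-|Hb] Pb.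
        -- apply Rmin_l.
        -- eapply Rle_trans; [apply Rmin_r | apply HT; auto].
    + exists m. split; auto. intros b [<-|Hb] Pb; [contradiction|auto].
Qed.

Lemma forward_by_steps (P Q : R -> Prop) (T : R) : 0 < T ->
  (forall tau, P tau -> P (tau + T)) ->
  (forall tau, P tau -> forall v, 0 <= v <= T -> Q (tau + v)) ->
  forall tau, P tau -> forall u, 0 <= u -> Q (tau + u).
Proof.
  intros HT Hstep Hcover tau Htau.
  assert (Hn : forall n : nat, P (tau + INR n * T) /\
                 forall u, 0 <= u <= INR n * T -> Q (tau + u)).
  { induction n as [|n [HPn HQn]].
    - simpl. rewrite Rmult_0_l, Rplus_0_r. split; auto.
      intros u Hu. apply Hcover; auto. lra.
    - rewrite S_INR. split.
      + replace (tau + (INR n + 1) * T) with (tau + INR n * T + T) by ring. auto.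
      + intros u Hu. rewrite Rmult_plus_distr_r, Rmult_1_l in Hu.
        destruct (Rle_or_lt u (INR n * T)) as [Hle|Hlt]; [apply HQn; lra|].
        replace (tau + u) with (tau + INR n * T + (u - INR n * T)) by ring.
        apply Hcover; auto. lra. }
  intros u Hu. destruct (INR_archimed T u HT) as [n Hnu].
  apply (Hn n). lra.
Qed.

Section MetricSpace.
Context {M : Type} (d : M -> M -> R).
Hypothesis Hm : is_metric d.
Hypothesis Hc : is_compact_space d.

Lemma dist_ge0 x y : 0 <= d x y.
Proof. apply Hm. Qed.

Lemma dist_refl x : d x x = 0.
Proof. apply Hm. reflexivity. Qed.

Lemma dist_sym x y : d x y = d y x.
Proof. apply Hm. Qed.

Lemma dist_triangle x y z : d x z <= d x y + d y z.
Proof. apply Hm. Qed.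

Lemma dist_pos x y : x <> y -> 0 < d x y.
Proof.
  intros Hxy. destruct (dist_ge0 x y) as [Hlt|Heq]; auto.
  exfalso. apply Hxy. apply Hm. auto.
Qed.

Lemma ball_open r p : is_open d (ball d r p).
Proof.
  intros x Hx. unfold ball in *. exists (r - d p x). split; [lra|].
  intros z Hz. unfold ball in Hz. pose proof (dist_triangle p x z). lra.
Qed.

Lemma open_dist_gt r p : is_open d (fun x => r < d p x).
Proof.
  intros x Hx. exists (d p x - r). split; [lra|].
  intros z Hz. unfold ball in Hz.
  assert (Htri := dist_triangle p z x). rewrite (dist_sym z x) in Htri. lra.
Qed.

Lemma compact_closed_cover (K : M -> Prop) {I : Type} (O : I -> M -> Prop) :
  is_open d (fun x => ~ K x) -> (forall i, is_open d (O i)) ->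
  (forall x, K x -> exists i, O i x) ->
  exists l : list I, forall x, K x -> exists i, In i l /\ O i x.
Proof.
  intros HK HO Hcov.
  set (U := fun o : option I => match o with None => fun x => ~ K x | Some i => O i end).
  destruct (Hc _ U) as [l Hl].
  - intros [i|]; simpl; auto.
  - intros x. destruct (classic (K x)) as [Kx|nKx].
    + destruct (Hcov x Kx) as [i Hi]. exists (Some i). auto.
    + exists None. auto.
  - exists (flat_map (fun o => match o with None => nil | Some i => i :: nil end) l).
    intros x Kx. destruct (Hl x) as [[i|] [Hin Hx]]; simpl in Hx; [|contradiction].
    exists i. split; auto. apply in_flat_map. exists (Some i). simpl; auto.
Qed.

Section Flow.
Variable phi : R -> M -> M.
Hypothesis Hf : is_flow d phi.

Lemma flow_zero x : phi 0 x = x.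
Proof. apply Hf. Qed.

Lemma flow_add s t x : phi (s + t) x = phi s (phi t x).
Proof. apply Hf. Qed.

Lemma flow_opp_cancel t x : phi (- t) (phi t x) = x.
Proof. rewrite <- flow_add, Rplus_opp_l. apply flow_zero. Qed.

Lemma open_flow_preimage_ball t r q : is_open d (fun x => d q (phi t x) < r).
Proof.
  intros x Hx. set (eps := r - d q (phi t x)).
  destruct (proj1 Hf t x eps) as [de [Hde Hcont]]; [unfold eps; lra|].
  exists de. split; auto. intros y Hy. unfold ball in Hy.
  assert (Hxy := Hcont t y). rewrite Rminus_diag, Rabs_R0 in Hxy.
  specialize (Hxy Hde Hy).
  pose proof (dist_triangle q (phi t x) (phi t y)). unfold eps in Hxy. lra.
Qed.

Lemma flow_equicontinuous_at a b x e : 0 < e -> exists de, 0 < de /\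
  forall s y z, a <= s <= b -> d x y < de -> d x z < de -> d (phi s y) (phi s z) < e.
Proof.
  intros He.
  assert (Hcont : forall t, exists de, 0 < de /\ forall s y, Rabs (s - t) < de ->
                    d x y < de -> d (phi t x) (phi s y) < e / 2).
  { intros t. apply (proj1 Hf). lra. }
  destruct (choice _ Hcont) as [f Hf'].
  set (delta := fun t => mkposreal (f t) (proj1 (Hf' t))).
  destruct (Coquelicot.Compactness.compactness_value_1d a b delta) as [dd Hdd].
  exists dd. split; [apply cond_pos|].
  intros s y z Hs Hy Hz. apply NNPP. intros Hn. apply (Hdd s Hs).
  intros [t [Ht [Hst Hdt]]]. apply Hn. simpl in Hst, Hdt.
  destruct (Hf' t) as [_ Hft].
  assert (Hty := Hft s y Hst ltac:(lra)). assert (Htz := Hft s z Hst ltac:(lra)).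
  assert (Htri := dist_triangle (phi s y) (phi t x) (phi s z)).
  rewrite (dist_sym (phi s y) (phi t x)) in Htri. lra.
Qed.

Lemma flow_uniform_continuity a b e : 0 < e -> exists de, 0 < de /\
  forall s x y, a <= s <= b -> d x y < de -> d (phi s x) (phi s y) < e.
Proof.
  intros He.
  assert (Hloc : forall x, exists de, 0 < de /\ forall s y z, a <= s <= b ->
                   d x y < de -> d x z < de -> d (phi s y) (phi s z) < e)
    by (intros x; apply flow_equicontinuous_at; auto).
  destruct (choice _ Hloc) as [de Hde].
  destruct (Hc M (fun x => ball d (de x / 2) x)) as [l Hl].
  - intros x. apply ball_open.
  - intros x. exists x. unfold ball. rewrite dist_refl. pose proof (proj1 (Hde x)). lra.
  - destruct (list_pos_lower_bound (fun _ => True) (fun x => de x / 2) l) as [m [Hm0 Hmin]].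
    { intros x _. pose proof (proj1 (Hde x)). lra. }
    exists m. split; auto. intros s y z Hs Hyz.
    destruct (Hl y) as [x [Hin Hxy]]. unfold ball in Hxy.
    assert (Hmx := Hmin x Hin I).
    apply (proj2 (Hde x) s y z Hs); [lra|].
    pose proof (dist_triangle x y z). lra.
Qed.

Lemma pseudotrajectory_mono D D' xi :
  pseudotrajectory d phi D xi -> D <= D' -> pseudotrajectory d phi D' xi.
Proof. intros Hxi HD t s Hs. specialize (Hxi t s Hs). lra. Qed.

Lemma forward_shadowing_nat (n : nat) e : 0 < e -> exists D, 0 < D /\
  forall xi, pseudotrajectory d phi D xi -> forall tau s, 0 <= s <= INR n ->
    d (xi (tau + s)) (phi s (xi tau)) < e.
Proof.
  revert e. induction n as [|n IH]; intros e He.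
  - exists 1. split; [lra|]. intros xi _ tau s Hs. simpl in Hs.
    replace s with 0 by lra. rewrite Rplus_0_r, flow_zero, dist_refl. auto.
  - destruct (flow_uniform_continuity 0 1 (e / 2)) as [de [Hde Hunif]]; [lra|].
    destruct (IH (Rmin de e)) as [D' [HD' Hsh]]; [apply Rmin_glb_lt; auto|].
    exists (Rmin D' (e / 2)). split; [apply Rmin_glb_lt; lra|].
    intros xi Hxi tau s Hs. rewrite S_INR in Hs.
    assert (Hxi' := pseudotrajectory_mono _ _ _ Hxi (Rmin_l _ _)).
    pose proof (Rmin_l de e). pose proof (Rmin_r de e). pose proof (Rmin_r D' (e / 2)).
    destruct (Rle_or_lt s (INR n)) as [Hsn|Hsn].
    + assert (Hs' := Hsh xi Hxi' tau s ltac:(lra)). lra.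
    + set (u := s - INR n).
      assert (Hstep := Hxi (tau + INR n) u ltac:(unfold u; lra)).
      assert (Hn := Hsh xi Hxi' tau (INR n) ltac:(split; [apply pos_INR|lra])).
      assert (Hu := Hunif u _ _ ltac:(unfold u; lra) (Rlt_le_trans _ _ _ Hn (Rmin_l _ _))).
      rewrite <- flow_add in Hu. replace (u + INR n) with s in Hu by (unfold u; lra).
      replace (tau + INR n + u) with (tau + s) in Hstep by (unfold u; lra).
      pose proof (dist_triangle (xi (tau + s)) (phi u (xi (tau + INR n))) (phi s (xi tau))).
      lra.
Qed.

Lemma shadowing T e : 0 < e -> exists D, 0 < D /\
  forall xi, pseudotrajectory d phi D xi -> forall tau s, - T <= s <= T ->
    d (xi (tau + s)) (phi s (xi tau)) < e.
Proof.
  intros He. destruct (INR_archimed 1 T ltac:(lra)) as [n Hn]. rewrite Rmult_1_r in Hn.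
  destruct (flow_uniform_continuity (- T) 0 e He) as [de [Hde Hunif]].
  destruct (forward_shadowing_nat n e He) as [D1 [HD1 Hsh1]].
  destruct (forward_shadowing_nat n de Hde) as [D2 [HD2 Hsh2]].
  exists (Rmin D1 D2). split; [apply Rmin_glb_lt; auto|].
  intros xi Hxi tau s Hs. destruct (Rle_or_lt 0 s) as [Hs0|Hs0].
  - apply (Hsh1 xi (pseudotrajectory_mono _ _ _ Hxi (Rmin_l _ _))). lra.
  (* run the orbit forward from [tau + s] and pull the estimate back by [phi s] *)
  - assert (Hback := Hsh2 xi (pseudotrajectory_mono _ _ _ Hxi (Rmin_r _ _))
                       (tau + s) (- s) ltac:(lra)).
    replace (tau + s + - s) with tau in Hback by ring.
    assert (Hpull := Hunif s _ _ ltac:(lra) Hback).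
    rewrite <- flow_add, Rplus_opp_r, flow_zero in Hpull. rewrite dist_sym. auto.
Qed.

Lemma omega_limit_exists x : exists z, omega_limit d phi x z.
Proof.
  apply NNPP. intros Hnone.
  assert (Hfar : forall y, exists p : R * R, 0 < fst p /\
           forall t, snd p <= t -> fst p <= d (phi t x) y).
  { intros y. apply NNPP. intros Hy. apply Hnone. exists y. intros eps T Heps.
    apply NNPP. intros Hno. apply Hy. exists (eps, T). split; auto.
    intros t Ht. apply Rnot_lt_le. intros Hlt. apply Hno. exists t. auto. }
  destruct (choice _ Hfar) as [f Hf'].
  destruct (Hc M (fun y => ball d (fst (f y)) y)) as [l Hl].
  - intros y. apply ball_open.
  - intros y. exists y. unfold ball. rewrite dist_refl. apply Hf'.
  - destruct (list_upper_bound (fun y => snd (f y)) l) as [T HT].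
    destruct (Hl (phi T x)) as [y [Hin Hy]]. unfold ball in Hy.
    destruct (Hf' y) as [_ Hy']. specialize (Hy' T (HT y Hin)).
    rewrite dist_sym in Hy'. lra.
Qed.

Lemma unstable_omega_limit_eq y z :
  lyap_unstable d phi z -> omega_limit d phi y z -> y = z.
Proof.
  intros Hz Hom. apply NNPP. intros Hyz.
  assert (Hpos := dist_pos z y ltac:(auto)).
  destruct (Hz (ball d (d z y) z)) as [U [[h [Hh HU]] Hback]].
  { exists (d z y). auto. }
  destruct (Hom h 0 Hh) as [t [Ht Hd]].
  assert (Hy := Hback (phi t y) (- t) ltac:(apply HU; unfold ball; rewrite dist_sym; auto)
                  ltac:(lra)).
  rewrite flow_opp_cancel in Hy. unfold ball in Hy. lra.
Qed.

Lemma lyap_stable_radius q r : lyap_stable d phi q -> 0 < r ->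
  exists eta, 0 < eta /\ forall y, d q y < eta -> forall t, 0 <= t -> d q (phi t y) < r.
Proof.
  intros Hq Hr. destruct (Hq (ball d r q)) as [U [[eta [Heta HU]] Hfwd]].
  { exists r. auto. }
  exists eta. split; auto. intros y Hy t Ht. apply (Hfwd y t); auto.
Qed.

Lemma uniform_attraction_time q rho a : 0 < a ->
  (forall y, d q y <= rho -> omega_limit d phi y q) ->
  exists T, forall y, d q y <= rho -> exists t, 0 <= t <= T /\ d q (phi t y) < a.
Proof.
  intros Ha Hattr.
  destruct (compact_closed_cover (fun y => d q y <= rho)
              (fun t : {t : R | 0 <= t} => fun y => d q (phi (proj1_sig t) y) < a))
    as [l Hl].
  - intros x Hx. destruct (open_dist_gt rho q x) as [e [He Hball]]; [lra|].
    exists e. split; auto. intros y Hy. specialize (Hball y Hy). lra.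
  - intros t. apply open_flow_preimage_ball.
  - intros y Hy. destruct (Hattr y Hy a 0 Ha) as [t [Ht Hd]].
    exists (exist _ t Ht). simpl. rewrite dist_sym. auto.
  - destruct (list_upper_bound (fun t : {t : R | 0 <= t} => proj1_sig t) l) as [T HT].
    exists T. intros y Hy. destruct (Hl y Hy) as [[t Ht] [Hin Hd]].
    exists t. split; auto. split; auto. apply (HT _ Hin).
Qed.

Lemma lyap_stable_uniform_return q rho a : lyap_stable d phi q -> 0 < a ->
  (forall y, d q y <= rho -> omega_limit d phi y q) ->
  exists T, 1 <= T /\ forall y, d q y <= rho -> d q (phi T y) < a.
Proof.
  intros Hq Ha Hattr.
  destruct (lyap_stable_radius q a Hq Ha) as [h [Hh Hnear]].
  destruct (uniform_attraction_time q rho h Hh Hattr) as [T0 HT0].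
  exists (Rmax 1 T0). split; [apply Rmax_l|]. intros y Hy.
  destruct (HT0 y Hy) as [t [Ht Hd]].
  assert (HtT : t <= Rmax 1 T0) by (eapply Rle_trans; [apply Ht | apply Rmax_r]).
  replace (phi (Rmax 1 T0) y) with (phi (Rmax 1 T0 - t) (phi t y))
    by (rewrite <- flow_add; f_equal; ring).
  apply Hnear; auto. lra.
Qed.

Hypothesis Hfin : exists l : list M, forall y, limit_set d phi y -> In y l.
Hypothesis Hsink : forall y, limit_set d phi y ->
  Sing phi y /\ (lyap_stable d phi y \/ lyap_unstable d phi y).

Lemma limit_set_isolated q :
  exists e, 0 < e /\ forall p, limit_set d phi p -> d q p < e -> p = q.
Proof.
  destruct Hfin as [l Hl].
  destruct (list_pos_lower_bound (fun p => p <> q) (d q) l) as [e [He Hmin]].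
  { intros p Hp. apply dist_pos. auto. }
  exists e. split; auto. intros p Hp Hd. apply NNPP. intros Hpq.
  specialize (Hmin p (Hl p Hp) Hpq). lra.
Qed.

Lemma lyap_stable_attracts q : lyap_stable d phi q ->
  exists eta, 0 < eta /\ forall y, d q y < eta -> omega_limit d phi y q.
Proof.
  intros Hq. destruct (limit_set_isolated q) as [e [He Hiso]].
  destruct (lyap_stable_radius q (e / 2) Hq) as [eta [Heta Hstay]]; [lra|].
  exists eta. split; auto. intros y Hy.
  destruct (omega_limit_exists y) as [z Hz].
  replace q with z; auto. apply Hiso; [exists y; auto|].
  destruct (Hz (e / 2) 0) as [t [Ht Hd]]; [lra|].
  pose proof (Hstay y Hy t Ht). pose proof (dist_triangle q (phi t y) z). lra.
Qed.

Definition traps (r : R) (q : M) (rho D : R) : Prop :=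
  forall xi, pseudotrajectory d phi D xi ->
  forall tau, d q (xi tau) < rho -> forall u, 0 <= u -> d q (xi (tau + u)) < r.

Lemma lyap_stable_traps q r : lyap_stable d phi q -> 0 < r ->
  exists rho D, 0 < rho /\ 0 < D /\ traps r q rho D.
Proof.
  intros Hq Hr.
  destruct (lyap_stable_radius q (r / 2) Hq) as [eta1 [Heta1 Hstay]]; [lra|].
  destruct (lyap_stable_attracts q Hq) as [eta2 [Heta2 Hattr]].
  set (eta := Rmin (Rmin eta1 eta2) r).
  assert (Heta : 0 < eta) by (repeat apply Rmin_glb_lt; auto).
  assert (Heta_1 : eta <= eta1) by (eapply Rle_trans; [apply Rmin_l | apply Rmin_l]).
  assert (Heta_2 : eta <= eta2) by (eapply Rle_trans; [apply Rmin_l | apply Rmin_r]).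
  assert (Heta_r : eta <= r) by apply Rmin_r.
  destruct (lyap_stable_uniform_return q (eta / 2) (eta / 4) Hq) as [T [HT1 Hreturn]].
  { lra. }
  { intros y Hy. apply Hattr. lra. }
  (* a return to the [eta/4]-ball leaves room for an [eta/4] shadowing error per period *)
  destruct (shadowing T (eta / 4)) as [D [HD Hsh]]; [lra|].
  exists (eta / 2), D. split; [lra|]. split; auto.
  intros xi Hxi.
  apply (forward_by_steps (fun tau => d q (xi tau) < eta / 2) (fun s => d q (xi s) < r) T).
  - lra.
  - intros tau Htau.
    assert (Hy := Hreturn (xi tau) ltac:(lra)).
    assert (Hs := Hsh xi Hxi tau T ltac:(lra)).
    assert (Htri := dist_triangle q (phi T (xi tau)) (xi (tau + T))).
    rewrite (dist_sym (phi T _)) in Htri. lra.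
  - intros tau Htau v Hv.
    assert (Hy := Hstay (xi tau) ltac:(lra) v ltac:(lra)).
    assert (Hs := Hsh xi Hxi tau v ltac:(lra)).
    assert (Htri := dist_triangle q (phi v (xi tau)) (xi (tau + v))).
    rewrite (dist_sym (phi v _)) in Htri. lra.
Qed.

Definition far_from_sing (r : R) (x : M) : Prop := forall p, Sing phi p -> ~ ball d r p x.

Record capture := Capture { cap_time : R; cap_sink : M; cap_radius : R; cap_delta : R }.

Definition valid_capture (r : R) (c : capture) : Prop :=
  0 <= cap_time c /\ Sing phi (cap_sink c) /\ lyap_stable d phi (cap_sink c) /\
  0 < cap_radius c /\ 0 < cap_delta c /\
  traps r (cap_sink c) (cap_radius c) (cap_delta c).

Lemma capture_of_far_point r x : 0 < r -> far_from_sing r x ->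
  exists c, valid_capture r c /\ d (cap_sink c) (phi (cap_time c) x) < cap_radius c / 2.
Proof.
  intros Hr Hx. destruct (omega_limit_exists x) as [z Hz].
  destruct (Hsink z ltac:(exists x; auto)) as [Hzs [Hst|Hun]].
  - destruct (lyap_stable_traps z r Hst Hr) as [rho [D [Hrho [HD Htrap]]]].
    destruct (Hz (rho / 2) 0) as [t [Ht Hd]]; [lra|].
    exists (Capture t z rho D). simpl. split; [repeat split; auto|].
    rewrite dist_sym. auto.
  - exfalso. apply (Hx z Hzs). rewrite (unstable_omega_limit_eq x z Hun Hz).
    unfold ball. rewrite dist_refl. auto.
Qed.

Lemma forward_capture r : 0 < r -> exists T e D, 0 < e /\ 0 < D /\
  forall x, far_from_sing r x ->
  exists q, Sing phi q /\ lyap_stable d phi q /\ exists t, 0 <= t <= T /\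
    forall xi, pseudotrajectory d phi D xi -> forall tau,
      d (xi (tau + t)) (phi t x) < e -> forall u, t <= u -> ball d r q (xi (tau + u)).
Proof.
  intros Hr.
  destruct (compact_closed_cover (far_from_sing r)
              (fun c : {c | valid_capture r c} => fun y =>
                 d (cap_sink (proj1_sig c)) (phi (cap_time (proj1_sig c)) y)
                   < cap_radius (proj1_sig c) / 2)) as [l Hl].
  - intros x Hx. apply not_all_ex_not in Hx. destruct Hx as [p Hp].
    apply imply_to_and in Hp. destruct Hp as [Hps Hpx]. apply NNPP in Hpx.
    destruct (ball_open r p x Hpx) as [e [He Hball]].
    exists e. split; auto. intros y Hy Hfar. exact (Hfar p Hps (Hball y Hy)).
  - intros c. apply open_flow_preimage_ball.
  - intros x Hx. destruct (capture_of_far_point r x Hr Hx) as [c [Hcv Hd]].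
    exists (exist _ c Hcv). auto.
  - destruct (list_upper_bound (fun c : {c | valid_capture r c} => cap_time (proj1_sig c)) l)
      as [T HT].
    destruct (list_pos_lower_bound (fun _ => True)
                (fun c : {c | valid_capture r c} => cap_radius (proj1_sig c) / 2) l)
      as [e [He Hemin]].
    { intros [c Hcv] _. pose proof Hcv as (_ & _ & _ & ? & _). simpl. lra. }
    destruct (list_pos_lower_bound (fun _ => True)
                (fun c : {c | valid_capture r c} => cap_delta (proj1_sig c)) l)
      as [D [HD HDmin]].
    { intros [c Hcv] _. pose proof Hcv as (_ & _ & _ & _ & ? & _). auto. }
    exists T, e, D. split; auto. split; auto.
    intros x Hx. destruct (Hl x Hx) as [[c Hcv] [Hin Hd]].
    assert (Hec := Hemin _ Hin I). assert (HDc := HDmin _ Hin I).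
    assert (HTc := HT _ Hin). simpl in Hd, Hec, HDc, HTc.
    pose proof Hcv as (Ht & Hsq & Hstq & Hrho & _ & Htrap).
    exists (cap_sink c). split; auto. split; auto. exists (cap_time c). split; auto.
    intros xi Hxi tau Hclose u Hu.
    assert (Hnear : d (cap_sink c) (xi (tau + cap_time c)) < cap_radius c).
    { assert (Htri := dist_triangle (cap_sink c) (phi (cap_time c) x) (xi (tau + cap_time c))).
      rewrite (dist_sym (phi _ x)) in Htri. lra. }
    unfold ball. replace (tau + u) with (tau + cap_time c + (u - cap_time c)) by ring.
    apply (Htrap xi (pseudotrajectory_mono _ _ _ Hxi HDc) _ Hnear). lra.
Qed.

End Flow.
End MetricSpace.

Definition reverse_flow {M : Type} (phi : R -> M -> M) : R -> M -> M :=
  fun t x => phi (- t) x.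

Section TimeReversal.
Context {M : Type} (d : M -> M -> R) (phi : R -> M -> M).

Lemma reverse_flow_is_flow : is_flow d phi -> is_flow d (reverse_flow phi).
Proof.
  intros [Hcont [H0 Hadd]]. unfold reverse_flow. split; [|split].
  - intros t x eps Heps. destruct (Hcont (- t) x eps Heps) as [de [Hde H]].
    exists de. split; auto. intros s y Hs Hy. apply H; auto.
    replace (- s - - t) with (- (s - t)) by ring. rewrite Rabs_Ropp. auto.
  - intros x. rewrite Ropp_0. auto.
  - intros s t x. rewrite <- Hadd. f_equal. ring.
Qed.

Lemma Sing_reverse_flow p : Sing (reverse_flow phi) p <-> Sing phi p.
Proof.
  unfold Sing, reverse_flow. split; intros H t; auto.
  rewrite <- (Ropp_involutive t). apply H.
Qed.

Lemma lyap_stable_reverse_flow p :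
  lyap_stable d (reverse_flow phi) p <-> lyap_unstable d phi p.
Proof.
  unfold reverse_flow. split; intros H V HV; destruct (H V HV) as [U [HU Hinv]];
    exists U; split; auto; intros x t Hx Ht.
  - rewrite <- (Ropp_involutive t). apply Hinv; auto. lra.
  - apply Hinv; auto. lra.
Qed.

Lemma lyap_unstable_reverse_flow p :
  lyap_unstable d (reverse_flow phi) p <-> lyap_stable d phi p.
Proof.
  unfold reverse_flow. split; intros H V HV; destruct (H V HV) as [U [HU Hinv]];
    exists U; split; auto; intros x t Hx Ht.
  - rewrite <- (Ropp_involutive t). apply Hinv; auto. lra.
  - apply Hinv; auto. lra.
Qed.

Lemma limit_set_reverse_flow y : limit_set d (reverse_flow phi) y -> limit_set d phi y.
Proof.
  intros [x [Hom|Hal]]; exists x; [right|left]; intros eps T Heps.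
  - destruct (Hom eps (- T) Heps) as [t [Ht Hd]]. exists (- t). split; [lra|auto].
  - destruct (Hal eps (- T) Heps) as [t [Ht Hd]]. exists (- t). split; [lra|auto].
Qed.

Lemma pseudotrajectory_reverse : is_metric d -> is_compact_space d -> is_flow d phi ->
  forall e, 0 < e -> exists D, 0 < D /\ forall xi, pseudotrajectory d phi D xi ->
    pseudotrajectory d (reverse_flow phi) e (fun t => xi (- t)).
Proof.
  intros Hm Hc Hf e He. destruct (shadowing d Hm Hc phi Hf 1 e He) as [D [HD Hsh]].
  exists D. split; auto. intros xi Hxi t s Hs. unfold reverse_flow.
  replace (- (t + s)) with (- t + - s) by ring. apply Hsh; auto. lra.
Qed.

End TimeReversal.

Section Capture.
Context {M : Type} (d : M -> M -> R) (phi : R -> M -> M).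
Hypothesis Hm : is_metric d.
Hypothesis Hc : is_compact_space d.
Hypothesis Hf : is_flow d phi.
Hypothesis Hfin : exists l : list M, forall y, limit_set d phi y -> In y l.
Hypothesis Hsink : forall y, limit_set d phi y ->
  Sing phi y /\ (lyap_stable d phi y \/ lyap_unstable d phi y).

Lemma backward_capture r : 0 < r -> exists T e D, 0 < e /\ 0 < D /\
  forall x, far_from_sing d phi r x ->
  exists p, Sing phi p /\ lyap_unstable d phi p /\ exists t, 0 <= t <= T /\
    forall xi, pseudotrajectory d phi D xi -> forall tau,
      d (xi (tau - t)) (phi (- t) x) < e -> forall u, t <= u -> ball d r p (xi (tau - u)).
Proof.
  intros Hr.
  destruct (forward_capture d Hm Hc (reverse_flow phi) (reverse_flow_is_flow d phi Hf))
    with (r := r) as [T [e [D' [He [HD' Hfwd]]]]]; auto.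
  - destruct Hfin as [l Hl]. exists l. intros y Hy. apply Hl, (limit_set_reverse_flow d). auto.
  - intros y Hy. destruct (Hsink y (limit_set_reverse_flow d phi y Hy)) as [Hs [Hst|Hun]].
    + split; [apply Sing_reverse_flow; auto|]. right. apply lyap_unstable_reverse_flow. auto.
    + split; [apply Sing_reverse_flow; auto|]. left. apply lyap_stable_reverse_flow. auto.
  - destruct (pseudotrajectory_reverse d phi Hm Hc Hf D' HD') as [D [HD Hrev]].
    exists T, e, D. split; auto. split; auto. intros x Hx.
    destruct (Hfwd x) as [p [Hps [Hpu [t [Ht Hcap]]]]].
    { intros p Hp. apply Hx, Sing_reverse_flow. auto. }
    exists p. split; [apply Sing_reverse_flow; auto|].
    split; [apply lyap_stable_reverse_flow; auto|]. exists t. split; auto.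
    intros xi Hxi tau Hclose u Hu.
    replace (tau - u) with (- (- tau + u)) by ring.
    apply (Hcap (fun s => xi (- s)) (Hrev xi Hxi) (- tau)); auto.
    unfold reverse_flow. replace (- (- tau + t)) with (tau - t) by ring. auto.
Qed.

Lemma two_sided_capture r : 0 < r -> exists S e D, 0 < S /\ 0 < e /\ 0 < D /\
  forall x, far_from_sing d phi r x ->
  exists p q, Sing phi p /\ lyap_unstable d phi p /\ Sing phi q /\ lyap_stable d phi q /\
    forall xi, pseudotrajectory d phi D xi -> forall tau,
      (forall s, - S <= s <= S -> d (xi (tau + s)) (phi s x) < e) ->
      (forall u, S <= u -> ball d r p (xi (tau - u))) /\
      (forall u, S <= u -> ball d r q (xi (tau + u))).
Proof.
  intros Hr.
  destruct (forward_capture d Hm Hc phi Hf Hfin Hsink r Hr) as [T1 [e1 [D1 [He1 [HD1 Hfwd]]]]].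
  destruct (backward_capture r Hr) as [T2 [e2 [D2 [He2 [HD2 Hbwd]]]]].
  set (S := Rmax 1 (Rmax T1 T2)).
  assert (HS1 : 1 <= S) by apply Rmax_l.
  assert (HST1 : T1 <= S) by (eapply Rle_trans; [apply Rmax_l | apply Rmax_r]).
  assert (HST2 : T2 <= S) by (eapply Rle_trans; [apply Rmax_r | apply Rmax_r]).
  exists S, (Rmin e1 e2), (Rmin D1 D2).
  split; [lra|]. split; [apply Rmin_glb_lt; auto|]. split; [apply Rmin_glb_lt; auto|].
  intros x Hx.
  destruct (Hfwd x Hx) as [q [Hqs [Hqst [t1 [Ht1 Hq]]]]].
  destruct (Hbwd x Hx) as [p [Hps [Hpun [t2 [Ht2 Hp]]]]].
  exists p, q. split; auto. split; auto. split; auto. split; auto.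
  intros xi Hxi tau Hclose. pose proof (Rmin_l e1 e2). pose proof (Rmin_r e1 e2).
  split.
  - intros u Hu. apply (Hp xi (pseudotrajectory_mono d phi _ _ xi Hxi (Rmin_r _ _))); [|lra].
    assert (Hc2 := Hclose (- t2) ltac:(lra)). unfold Rminus. lra.
  - intros u Hu. apply (Hq xi (pseudotrajectory_mono d phi _ _ xi Hxi (Rmin_l _ _))); [|lra].
    assert (Hc1 := Hclose t1 ltac:(lra)). lra.
Qed.

End Capture.

Theorem mainTheorem8 (M2 : Type) (dist2 : M2 -> M2 -> R) (phi2 : R -> M2 -> M2) :
  is_metric dist2 ->
  is_compact_space dist2 ->
  is_flow dist2 phi2 ->
  (exists l : list M2, forall y, limit_set dist2 phi2 y -> In y l) ->
  (forall y, limit_set dist2 phi2 y ->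
     Sing phi2 y /\ (lyap_stable dist2 phi2 y \/ lyap_unstable dist2 phi2 y)) ->
  forall eps0 r2 : R, 0 < eps0 -> 0 < r2 ->
  let F := fun x : M2 => forall p, Sing phi2 p -> ~ ball dist2 r2 p x in
  exists d1 S0 : R, 0 < d1 /\ 0 < S0 /\
    forall xi2 : R -> M2, pseudotrajectory dist2 phi2 d1 xi2 ->
    forall s0 : R, F (xi2 s0) ->
    exists p q : M2,
      Sing phi2 p /\ lyap_unstable dist2 phi2 p /\
      Sing phi2 q /\ lyap_stable dist2 phi2 q /\
      (forall t, t <= - S0 -> ball dist2 r2 p (xi2 (t + s0))) /\
      (forall t, S0 <= t -> ball dist2 r2 q (xi2 (t + s0))) /\
      (forall t, - S0 <= t <= 2 * S0 ->
         dist2 (xi2 (t + s0)) (phi2 t (xi2 s0)) < Rmin r2 (eps0 / 4)).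
Proof.
  intros Hm Hc Hf Hfin Hsink eps0 r2 He0 Hr2 F.
  destruct (two_sided_capture dist2 phi2 Hm Hc Hf Hfin Hsink r2 Hr2)
    as [S [e [D [HS [He [HD Hcap]]]]]].
  pose proof (Rmin_l e (Rmin r2 (eps0 / 4))). pose proof (Rmin_r e (Rmin r2 (eps0 / 4))).
  set (e' := Rmin e (Rmin r2 (eps0 / 4))) in *.
  assert (He' : 0 < e') by (repeat apply Rmin_glb_lt; lra).
  destruct (shadowing dist2 Hm Hc phi2 Hf (2 * S) e' He') as [D0 [HD0 Hsh]].
  exists (Rmin D0 D), S. split; [apply Rmin_glb_lt; auto|]. split; auto.
  intros xi Hxi s0 HF.
  assert (Hclose : forall s, - (2 * S) <= s <= 2 * S ->
            dist2 (xi (s0 + s)) (phi2 s (xi s0)) < e').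
  { intros s Hs. apply Hsh; auto. apply (pseudotrajectory_mono _ _ _ _ _ Hxi (Rmin_l _ _)). }
  destruct (Hcap (xi s0) HF) as [p [q (Hps & Hpun & Hqs & Hqst & Hpq)]].
  destruct (Hpq xi (pseudotrajectory_mono _ _ _ _ _ Hxi (Rmin_r _ _)) s0) as [Hpast Hfuture].
  { intros s Hs. assert (Hcs := Hclose s ltac:(lra)). lra. }
  exists p, q. split; auto. split; auto. split; auto. split; auto. split; [|split].
  - intros t Ht. replace (t + s0) with (s0 - - t) by ring. apply Hpast. lra.
  - intros t Ht. rewrite Rplus_comm. auto.
  - intros t Ht. rewrite Rplus_comm. assert (Hct := Hclose t ltac:(lra)). lra.
Qed.
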